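(* Let $X$ be a compact nonpositively curved cube complex and $(\tilde Y,\phi)$ a quasiline in $\tilde X$. Then there exist constants $N,M$, depending only on $(\tilde Y,\phi)$, such that for every integer $k>0$: (1) $\operatorname{diam}\big(H^+\cap\phi^{\pm k}(H^-)\big)\le kN$ for every essential hyperplane $H$ of $\tilde Y$ with halfspaces $H^+,H^-$; (2) if an essential hyperplane $H$ of $\tilde Y$ crosses a combinatorial geodesic $\gamma$ in $\tilde Y$ at an edge $e_0$, and $e_0$ has distance $\ge kM$ from both endpoints of $\gamma$, then $\phi^{k}(H)$ and $\phi^{-k}(H)$ cross $\gamma$. Moreover, any constants $\overline M\ge M$, $\overline N\ge N$ also satisfy (2) and (1) respectively.
   Context: $\tilde X$ is the universal cover of $X$. A quasiline in $\tilde X$ is a pair $(\tilde Y,\phi)$ with $\tilde Y\subset\tilde X$ a convex subcomplex and $\phi\in\pi_1X$ nontrivial such that $\langle\phi\rangle$ acts cocompactly on $\tilde Y$. Hyperplanes of $\tilde Y$ and their halfspaces $H^\pm$ (components of $\tilde Y$ minus the open carrier of $H$) are taken in the CAT(0) cube complex $\tilde Y$. A halfspace is deep if it contains points arbitrarily far from $H$; $H$ is essential if both halfspaces are deep. *)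

From Stdlib Require List Relations.
From mathcomp Require Import all_boot.
Set Implicit Arguments.
Unset Strict Implicit.
Unset Printing Implicit Defensive.

(* A cube complex is encoded by its 1-skeleton: a simple graph on vertices V
   with adjacency [adj].  CAT(0) cube complexes are exactly (cube completions
   of) median graphs; all notions below are combinatorial. *)

Section Graph.
Variables (V : Type) (adj : V -> V -> Prop).

Inductive walk (P : V -> Prop) : V -> V -> nat -> Prop :=
| walk0 x : P x -> walk P x x 0
| walkS x y z n : P x -> adj x y -> walk P y z n -> walk P x z n.+1.

Definition dle (P : V -> Prop) x y n := exists m, m <= n /\ walk P x y m.

Definition dist (P : V -> Prop) x y n :=
  walk P x y n /\ forall m, walk P x y m -> n <= m.

Definition allV : V -> Prop := fun _ => True.

Definition geodesic (P : V -> Prop) (gamma : nat -> V) (n : nat) :=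
  (forall i, i <= n -> P (gamma i)) /\
  (forall i, i < n -> adj (gamma i) (gamma i.+1)) /\
  dist P (gamma 0) (gamma n) n.

Definition in_interval x y m :=
  exists a b, dist allV x m a /\ dist allV m y b /\ dist allV x y (a + b).

Definition median_graph :=
  (forall x y, adj x y -> adj y x) /\
  (forall x, ~ adj x x) /\
  (forall x y, exists n, walk allV x y n) /\
  (forall x y z, exists m, in_interval x y m /\ in_interval y z m /\
      in_interval x z m /\
      forall m', in_interval x y m' -> in_interval y z m' ->
                 in_interval x z m' -> m' = m).

(* combinatorially convex vertex set (= vertex set of a convex subcomplex) *)
Definition convex (Y : V -> Prop) :=
  forall gamma n, geodesic allV gamma n -> Y (gamma 0) -> Y (gamma n) ->
    forall i, i <= n -> Y (gamma i).

Definition is_cube (Q : V -> Prop) :=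
  exists (d : nat) (c : {ffun 'I_d -> bool} -> V),
    injective c /\ (forall x, Q x <-> exists u, c u = x) /\
    (forall u w, adj (c u) (c w) <-> #|[pred i | u i != w i]| = 1).

Definition automorphism (g : V -> V) :=
  (exists h, cancel g h /\ cancel h g) /\ (forall x y, adj x y <-> adj (g x) (g y)).

Definition locally_finite :=
  forall v, exists l : list V, forall w, adj v w -> List.In w l.

(* (adj, G) is the universal cover tilde X of a compact nonpositively curved
   cube complex X, with G = pi_1 X acting by deck transformations:
   tilde X is CAT(0) (median 1-skeleton), G is a group of cubical
   automorphisms acting freely (no nontrivial element stabilises a cube,
   i.e. no fixed points in the realisation) and cocompactly (locally finite,
   finitely many vertex orbits). *)
Definition compact_npc_cover (G : (V -> V) -> Prop) :=
  median_graph /\ locally_finite /\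
  (forall g, G g -> automorphism g) /\
  G id /\
  (forall g h, G g -> G h -> G (g \o h)) /\
  (forall g, G g -> exists h, G h /\ cancel g h /\ cancel h g) /\
  (forall g Q, G g -> is_cube Q -> (forall x, Q x -> Q (g x)) -> forall x, g x = x) /\
  (exists F : list V, forall v, exists g z, G g /\ List.In z F /\ v = g z).

Definition quasiline (G : (V -> V) -> Prop) (Y : V -> Prop) (phi psi : V -> V) :=
  (exists y, Y y) /\ convex Y /\
  G phi /\ cancel phi psi /\ cancel psi phi /\
  (exists v, phi v <> v) /\
  (forall x, Y x <-> Y (phi x)) /\
  (exists F : list V, (forall z, List.In z F -> Y z) /\
     forall y, Y y -> exists z k, List.In z F /\
        (y = iter k phi z \/ y = iter k psi z)).

(* Hyperplanes of the CAT(0) cube complex tilde Y (induced subgraph on Y):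
   classes of (oriented) edges of Y generated by opposite sides of squares
   of Y and by edge reversal. *)
Definition edgeY (Y : V -> Prop) (e : V * V) := [/\ Y e.1, Y e.2 & adj e.1 e.2].

Inductive elem_par (Y : V -> Prop) : V * V -> V * V -> Prop :=
| par_sq a b c d : Y a -> Y b -> Y c -> Y d -> adj a b -> adj c d ->
    adj a c -> adj b d -> a <> d -> b <> c -> elem_par Y (a, b) (c, d)
| par_flip a b : edgeY Y (a, b) -> elem_par Y (a, b) (b, a).

(* f is dual to the hyperplane H(e) of tilde Y dual to the edge e of Y *)
Definition dual (Y : V -> Prop) (e f : V * V) :=
  edgeY Y e /\ Relation_Operators.clos_refl_sym_trans _ (elem_par Y) e f.

(* walks in Y not using edges dual to H(e): 1-skeleton of tilde Y minus the
   open carrier of H(e) *)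
Inductive walk_avoid (Y : V -> Prop) (e : V * V) : V -> V -> Prop :=
| wa0 x : Y x -> walk_avoid Y e x x
| waS x y z : Y x -> adj x y -> ~ dual Y e (x, y) -> walk_avoid Y e y z ->
    walk_avoid Y e x z.

(* halfspace of H(a,b) containing the vertex s (s = a or s = b): vertices of
   the component of tilde Y - open carrier of H containing s *)
Definition halfspace (Y : V -> Prop) (a b s : V) (x : V) := walk_avoid Y (a, b) s x.

(* the halfspace of H(a,b) containing s is deep: contains vertices arbitrarily
   far (in tilde Y) from H, i.e. from the carrier of H *)
Definition deep (Y : V -> Prop) (a b s : V) :=
  forall r, exists x, halfspace Y a b s x /\
    forall f, dual Y (a, b) f -> ~ dle Y x f.1 r /\ ~ dle Y x f.2 r.

Definition essential (Y : V -> Prop) (a b : V) := deep Y a b a /\ deep Y a b b.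

Definition diam_le (Y : V -> Prop) (S : V -> Prop) (D : nat) :=
  forall x y, S x -> S y -> dle Y x y D.

Definition crosses (Y : V -> Prop) (e : V * V) (gamma : nat -> V) (n : nat) :=
  exists j, j < n /\ dual Y e (gamma j, gamma j.+1).

End Graph.

(* The 1-skeleton of tilde X is a median graph, and the hyperplane dual to an
   edge ab of tilde Y has the halfspaces {x | d(x,a) < d(x,b)} and
   {x | d(x,b) < d(x,a)} (restricted to Y); these are convex, and the edges dual to
   the hyperplane are exactly the edges they separate.  By cocompactness every
   vertex of Y lies within a fixed distance of the orbit j |-> phi^j z0, so each
   vertex gets an orbit index j in Z, and distances are bounded by an affine
   function of index differences.  If the orbit map is not injective, Y is
   bounded and has no essential hyperplane.  Otherwise local finiteness makes it
   proper, which forces the indices of the carrier of an essential hyperplane to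
   be bounded: below some index lo everything lies in one halfspace, above some
   hi in the other.  The width hi - lo is uniform since there are only finitely
   many phi-orbits of edges.  Both statements then follow from index arithmetic:
   H+ and phi^{+-k}(H-) meet only in indices within a window of width
   (hi - lo) + k, and the ends of a geodesic crossing H far from its endpoints
   have indices beyond the window translated by +-k. *)

From Stdlib Require Import ZArith Lia Classical ClassicalEpsilon Relations List.
From mathcomp Require Import all_boot zify.
Set Implicit Arguments. Unset Strict Implicit. Unset Printing Implicit Defensive.

(** * The graph metric *)

Section Walks.
Variables (V : Type) (adj : V -> V -> Prop).
Hypothesis Hmed : median_graph adj.

Lemma adj_sym x y : adj x y -> adj y x.
Proof. by case: Hmed => H _; apply: H. Qed.

Lemma adj_irrefl x : ~ adj x x.
Proof. by case: Hmed => _ [H _]; apply: H. Qed.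

Lemma walk_ends P x y n : walk adj P x y n -> P x /\ P y.
Proof. by elim=> //= x0 y0 z n0 Px _ _ [_ Pz]. Qed.

Lemma walk_cat P x y z n m :
  walk adj P x y n -> walk adj P y z m -> walk adj P x z (n + m).
Proof. by elim=> [//|x0 y0 z0 n0 Px Ha _ IH] Hw; rewrite addSn; econstructor; eauto. Qed.

Lemma walk_sub (P Q : V -> Prop) x y n :
  (forall v, P v -> Q v) -> walk adj P x y n -> walk adj Q x y n.
Proof. by move=> H; elim=> [x0 Px|x0 y0 z0 n0 Px Ha _ IH]; econstructor; eauto. Qed.

Lemma walk1 P x y : P x -> P y -> adj x y -> walk adj P x y 1.
Proof. by move=> Px Py A; econstructor; eauto; constructor. Qed.

Lemma walk_rcons P x y z n : walk adj P x y n -> P z -> adj y z -> walk adj P x z n.+1.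
Proof.
move=> Hw Pz A; rewrite -addn1; apply: (walk_cat Hw).
by apply: walk1 => //; case: (walk_ends Hw).
Qed.

Lemma walk_rev P x y n : walk adj P x y n -> walk adj P y x n.
Proof.
elim=> [x0 Px|x0 y0 z0 n0 Px Ha Hw IH]; first by constructor.
exact: (walk_rcons IH Px (adj_sym Ha)).
Qed.

Lemma walk0_inv P x y : walk adj P x y 0 -> x = y.
Proof. by move=> H; inversion H. Qed.

Lemma walkS_inv P x y n :
  walk adj P x y n.+1 -> exists x', adj x x' /\ P x /\ walk adj P x' y n.
Proof. by move=> H; inversion H; subst; eauto. Qed.

Lemma dist_of_walk P x y n : walk adj P x y n -> exists m, dist adj P x y m.
Proof.
elim: n {-2}n (leqnn n) => [|N IHN] n le_nN Hn.
  by exists n; split => // m _; lia.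
case: (classic (exists m, m < n /\ walk adj P x y m)) => [[m [lt_mn Hm]]|Hmin].
  by apply: (IHN m) => //; lia.
exists n; split => // m Hm; case: (leqP n m) => // lt_mn.
by case: Hmin; exists m.
Qed.

Definition gdist (x y : V) : nat :=
  epsilon (inhabits 0) (fun n => dist adj (@allV V) x y n).

Lemma gdistP x y : dist adj (@allV V) x y (gdist x y).
Proof.
rewrite /gdist; apply: epsilon_spec.
case: Hmed => _ [_ [conn _]]; case: (conn x y) => n Hn.
exact: dist_of_walk Hn.
Qed.

Lemma gdist_walk x y : walk adj (@allV V) x y (gdist x y).
Proof. by case: (gdistP x y). Qed.

Lemma gdist_min x y n : walk adj (@allV V) x y n -> gdist x y <= n.
Proof. by case: (gdistP x y) => _; apply. Qed.

Lemma dist_gdist x y n : dist adj (@allV V) x y n -> n = gdist x y.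
Proof.
case=> Hw Hm; have := Hm _ (gdist_walk x y); have := gdist_min Hw; lia.
Qed.

Lemma gdistxx x : gdist x x = 0.
Proof. by apply/eqP; rewrite -leqn0; apply: gdist_min; constructor. Qed.

Lemma gdist_eq0 x y : gdist x y = 0 -> x = y.
Proof. by move=> H; have := gdist_walk x y; rewrite H; exact: walk0_inv. Qed.

Lemma gdistC x y : gdist x y = gdist y x.
Proof.
have := gdist_min (walk_rev (gdist_walk x y)).
have := gdist_min (walk_rev (gdist_walk y x)); lia.
Qed.

Lemma gdist_triangle x y z : gdist x z <= gdist x y + gdist y z.
Proof. by apply: gdist_min; apply: walk_cat; apply: gdist_walk. Qed.

End Walks.

(** * Median graphs and the halfspaces of an edge *)

Ltac gdist_sym_pair Hm u v :=
  lazymatch goal with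
  | _ : gdist _ u v = gdist _ v u |- _ => fail
  | _ : gdist _ v u = gdist _ u v |- _ => fail
  | _ => have := gdistC Hm u v; intro
  end.

Ltac gdist_sym :=
  repeat match goal with
  | Hm : median_graph ?adj, _ : context [@gdist _ ?adj ?u ?v] |- _ => gdist_sym_pair Hm u v
  | Hm : median_graph ?adj |- context [@gdist _ ?adj ?u ?v] => gdist_sym_pair Hm u v
  end.

Ltac gdist_lia := gdist_sym; lia.

Section MedianGraph.
Variables (V : Type) (adj : V -> V -> Prop).
Hypothesis Hmed : median_graph adj.

Local Notation gdist := (gdist adj).
Local Notation adj_sym := (adj_sym Hmed).
Local Notation gdistxx := (gdistxx Hmed).
Local Notation gdist_eq0 := (gdist_eq0 Hmed).
Local Notation gdist_triangle := (gdist_triangle Hmed).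

Lemma gdist_adj x y : adj x y -> gdist x y = 1.
Proof.
move=> A; have := gdist_min Hmed (walk1 (P := @allV V) I I A).
case E: (gdist x y) => [|n]; last by lia.
by move/gdist_eq0: E => E; subst; case: (adj_irrefl Hmed A).
Qed.

Lemma gdist1_adj x y : gdist x y = 1 -> adj x y.
Proof.
move=> E; have := gdist_walk Hmed x y; rewrite E => /(@walkS_inv V adj) [x' [A [_ Hw]]].
by rewrite -(walk0_inv Hw).
Qed.

Lemma gdist_succ x y n : gdist x y = n.+1 -> exists x', adj x x' /\ gdist x' y = n.
Proof.
move=> E; have := gdist_walk Hmed x y; rewrite E => /(@walkS_inv V adj) [x' [A [_ Hw]]].
exists x'; split => //.
have := gdist_min Hmed Hw; have := gdist_triangle x x' y; rewrite (gdist_adj A); lia.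
Qed.

Lemma gdist_adj_lipschitz x y z :
  adj x y -> gdist x z <= (gdist y z).+1 /\ gdist y z <= (gdist x z).+1.
Proof.
move=> A; have := gdist_triangle x y z; have := gdist_triangle y x z.
rewrite (gdist_adj A) (gdist_adj (adj_sym A)); lia.
Qed.

Definition between x y m := gdist x m + gdist m y = gdist x y.

Lemma in_interval_between x y m : in_interval adj x y m <-> between x y m.
Proof.
split.
  case=> [a [b [H1 [H2 H3]]]].
  by rewrite /between -(dist_gdist Hmed H1) -(dist_gdist Hmed H2) -(dist_gdist Hmed H3).
move=> H; exists (gdist x m), (gdist m y).
by rewrite H; split; [|split]; exact: gdistP.
Qed.

Lemma median_exists x y z : exists m, [/\ between x y m, between y z m & between x z m].
Proof.
case: Hmed => _ [_ [_ H]]; case: (H x y z) => m [h1 [h2 [h3 _]]].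
by exists m; split; apply/in_interval_between.
Qed.

Lemma median_unique x y z m m' :
  between x y m -> between y z m -> between x z m ->
  between x y m' -> between y z m' -> between x z m' -> m = m'.
Proof.
case: Hmed => _ [_ [_ H]]; case: (H x y z) => m0 [_ [_ [_ U]]].
by move=> /in_interval_between a1 /in_interval_between a2 /in_interval_between a3
  /in_interval_between b1 /in_interval_between b2 /in_interval_between b3;
  rewrite (U _ a1 a2 a3) (U _ b1 b2 b3).
Qed.

Lemma between_adj a b m : adj a b -> between a b m -> m = a \/ m = b.
Proof.
move=> A; rewrite /between (gdist_adj A) => H.
case E: (gdist a m) => [|k]; first by left; rewrite (gdist_eq0 E).
by right; apply: gdist_eq0; lia.
Qed.

Lemma gdist_adj_succ a b x :
  adj a b -> gdist x b = (gdist x a).+1 \/ gdist x a = (gdist x b).+1.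
Proof.
move=> A; case: (median_exists x a b) => m [h1 h2 h3].
case: (between_adj A h2) => E; subst m.
  by left; move: h3; rewrite /between (gdist_adj A); lia.
by right; move: h1; rewrite /between (gdist_adj (adj_sym A)); lia.
Qed.

Definition closer a b x := gdist x a < gdist x b.

Lemma closer_total a b x : adj a b -> closer a b x \/ closer b a x.
Proof. by move=> A; rewrite /closer; case: (gdist_adj_succ x A); lia. Qed.

Lemma closer_succ a b x : adj a b -> closer a b x -> gdist x b = (gdist x a).+1.
Proof. by move=> A; rewrite /closer; case: (gdist_adj_succ x A); lia. Qed.

Lemma closer_edge a b : adj a b -> closer a b a.
Proof. by move=> A; rewrite /closer gdistxx (gdist_adj A). Qed.

Lemma closer_disjoint a b x : closer a b x -> closer b a x -> False.
Proof. by rewrite /closer; lia. Qed.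

Lemma closerN a b x : adj a b -> ~~ closer a b x = closer b a x.
Proof.
move=> A; apply/idP/idP => [N|Wx]; first by case: (closer_total x A) => // W; rewrite W in N.
by apply/negP => W; apply: closer_disjoint W Wx.
Qed.

Definition separates a b u v :=
  (closer a b u /\ closer b a v) \/ (closer b a u /\ closer a b v).

Lemma separatesC a b u v : separates a b u v <-> separates a b v u.
Proof. by rewrite /separates; tauto. Qed.

Lemma separates_swap a b u v : separates a b u v <-> separates b a u v.
Proof. by rewrite /separates; tauto. Qed.

Lemma separates_gdist a b p q : adj a b -> adj p q -> closer a b p -> closer b a q ->
  gdist q a = (gdist p a).+1 /\ gdist q b = gdist p a.
Proof.
move=> A P Wp Wq.
have := closer_succ A Wp; have := closer_succ (adj_sym A) Wq.
have := gdist_adj_lipschitz a P; have := gdist_adj_lipschitz b P; gdist_lia.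
Qed.

Lemma closer_neighbour_unique a b x y1 y2 : adj a b ->
  closer a b x -> closer b a y1 -> closer b a y2 -> adj x y1 -> adj x y2 -> y1 = y2.
Proof.
move=> A Wx W1 W2 A1 A2; apply: NNPP => N.
have [e1 e2] := separates_gdist A A1 Wx W1.
have [e3 e4] := separates_gdist A A2 Wx W2.
have gx := closer_succ A Wx.
have d12 : gdist y1 y2 = 2.
  have := gdist_triangle y1 x y2; rewrite (gdist_adj (adj_sym A1)) (gdist_adj A2).
  case E: (gdist y1 y2) => [|[|k]] h //.
  - by case: N; apply: gdist_eq0.
  - by have := gdist_adj_succ a (gdist1_adj E); gdist_lia.
  - lia.
case: (median_exists y1 y2 b) => w [i1 i2 i3].
move: i1 i2 i3; rewrite /between d12 => i1 i2 i3.
have w1 : gdist y1 w = 1 by gdist_lia.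
have w2 : gdist w y2 = 1 by lia.
have [l1 l2] := gdist_adj_lipschitz a (gdist1_adj w1).
have fw := gdist_adj_succ w A.
have x1 := gdist_adj (adj_sym A1); have x2 := gdist_adj A2.
(* x and w are both medians of y1, y2, a. *)
have E : x = w by apply: (@median_unique y1 y2 a); rewrite /between; gdist_lia.
by subst w; gdist_lia.
Qed.

Lemma separates_square_oriented a b p q r s : adj a b -> adj p q -> adj r s ->
  adj p r -> adj q s -> p <> s -> q <> r ->
  closer a b p -> closer b a q -> closer a b r /\ closer b a s.
Proof.
move=> A Apq Ars Apr Aqs Nps Nqr Wp Wq; split.
  case: (closer_total r A) => // Wr.
  by case: Nqr; apply: (closer_neighbour_unique A Wp Wq Wr Apq Apr).
case: (closer_total s A) => // Ws.
by case: Nps; apply: (closer_neighbour_unique (adj_sym A) Wq Wp Ws (adj_sym Apq) Aqs).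
Qed.

Lemma separates_square a b p q r s : adj a b -> adj p q -> adj r s ->
  adj p r -> adj q s -> p <> s -> q <> r -> separates a b p q -> separates a b r s.
Proof.
move=> A Apq Ars Apr Aqs Nps Nqr [[Wp Wq]|[Wp Wq]].
  by left; apply: (separates_square_oriented A Apq Ars Apr Aqs Nps Nqr Wp Wq).
by right; apply: (separates_square_oriented (adj_sym A) Apq Ars Apr Aqs Nps Nqr Wp Wq).
Qed.

Lemma elem_par_edgeY (Y : V -> Prop) f g :
  elem_par adj Y f g -> edgeY adj Y f /\ edgeY adj Y g.
Proof.
case=> [a b c e Ya Yb Yc Ye Aab Ace Aac Abe _ _|a b [Ya Yb Aab]]; split; split => //.
exact: adj_sym.
Qed.

Lemma dual_separates (Y : V -> Prop) a b u v :
  dual adj Y (a, b) (u, v) -> separates a b u v.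
Proof.
case=> [[/= Ya Yb A] R].
suff key : forall f g, clos_refl_sym_trans _ (elem_par adj Y) f g ->
    (separates a b f.1 f.2 <-> separates a b g.1 g.2).
  by apply/(key _ _ R); left; split; [exact: closer_edge|exact: closer_edge (adj_sym A)].
move=> f g; elim=> //= [f0 g0 []|x y _ ->|x y z _ -> _ ->] //=.
  move=> p q r s _ _ _ _ Apq Ars Apr Aqs Nps Nqr; split; apply: separates_square => //;
    by [apply: adj_sym | auto].
by move=> p q _; exact: separatesC.
Qed.

Lemma dual_edgeY (Y : V -> Prop) e f : dual adj Y e f -> edgeY adj Y f.
Proof.
case=> He R.
suff key : forall f g, clos_refl_sym_trans _ (elem_par adj Y) f g ->
    (edgeY adj Y f <-> edgeY adj Y g) by apply/(key _ _ R).
move=> f0 g0; elim=> //= [x y /elem_par_edgeY []|x y _ ->|x y z _ -> _ ->] //.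
Qed.

Lemma dual_flip (Y : V -> Prop) e u v : dual adj Y e (u, v) -> dual adj Y e (v, u).
Proof.
move=> Hd; have He := dual_edgeY Hd; case: Hd => H1 R; split => //.
by apply: rst_trans R _; apply: rst_step; exact: par_flip.
Qed.

Lemma path_of_gdist n x y : gdist x y = n ->
  exists g : nat -> V, [/\ g 0 = x, g n = y & forall i, i < n -> adj (g i) (g i.+1)].
Proof.
elim: n x => [|n IH] x E; first by exists (fun _ => x); rewrite (gdist_eq0 E).
case: (gdist_succ E) => x' [A E']; case: (IH _ E') => g [g0 gn ga].
exists (fun i => if i is j.+1 then g j else x); split => // [[|i]] Hi /=.
  by rewrite g0.
by apply: ga.
Qed.

Lemma path_cat (g1 g2 : nat -> V) n1 n2 :
  (forall i, i < n1 -> adj (g1 i) (g1 i.+1)) -> (forall i, i < n2 -> adj (g2 i) (g2 i.+1)) ->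
  g1 n1 = g2 0 ->
  exists g : nat -> V, [/\ g 0 = g1 0, g n1 = g1 n1, g (n1 + n2) = g2 n2
    & forall i, i < n1 + n2 -> adj (g i) (g i.+1)].
Proof.
move=> a1 a2 e; exists (fun i => if i < n1 then g1 i else g2 (i - n1)); split.
- by case: n1 e {a1} => [|n1] //= <-.
- by rewrite ltnn subnn.
- by rewrite ltnNge leq_addr addKn.
move=> i Hi; case: (ltngtP i.+1 n1) => H.
- by apply: a1; lia.
- by rewrite subSn; [apply: a2; lia|lia].
- by rewrite -H subnn -e -H; apply: a1; lia.
Qed.

Lemma convex_between (Y : V -> Prop) x y w :
  convex adj Y -> Y x -> Y y -> between x y w -> Y w.
Proof.
move=> CY Yx Yy Bw.
case: (path_of_gdist (erefl (gdist x w))) => g1 [g10 g1n a1].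
case: (path_of_gdist (erefl (gdist w y))) => g2 [g20 g2n a2].
have e : g1 (gdist x w) = g2 0 by rewrite g1n g20.
case: (path_cat a1 a2 e) => g [g0 gw gy ag].
have Hg : geodesic adj (@allV V) g (gdist x w + gdist w y).
  by split => //; split => //; rewrite g0 gy g10 g2n Bw; exact: gdistP.
have := CY g _ Hg; rewrite g0 gy g10 g2n => /(_ Yx Yy (gdist x w) (leq_addr _ _)).
by rewrite gw g1n.
Qed.

Lemma convex_walk (Y : V -> Prop) n x y :
  convex adj Y -> gdist x y = n -> Y x -> Y y -> walk adj Y x y n.
Proof.
move=> CY; elim: n x => [|n IH] x E Yx Yy; first by rewrite (gdist_eq0 E); constructor.
case: (gdist_succ E) => x' [A E'].
have Yx' : Y x' by apply: (convex_between CY Yx Yy); rewrite /between (gdist_adj A); lia.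
by econstructor; eauto.
Qed.

Lemma dle_gdist (Y : V -> Prop) x y n :
  convex adj Y -> Y x -> Y y -> (dle adj Y x y n <-> gdist x y <= n).
Proof.
move=> CY Yx Yy; split.
  by case=> m [Hm Hw]; have := gdist_min Hmed (walk_sub (Q := @allV V) (fun _ _ => I) Hw); lia.
by move=> H; exists (gdist x y); split => //; exact: convex_walk.
Qed.

Lemma separates_dual_closer (Y : V -> Prop) a b u v :
  convex adj Y -> Y a -> Y b -> adj a b -> Y u -> Y v -> adj u v ->
  closer a b u -> closer b a v -> dual adj Y (a, b) (u, v).
Proof.
(* Induct on d(u, a): for a step u' from u towards a and the median w of u', v, b,
   the edge u'w is separated and u u' w v is a square. *)
move=> CY Ya Yb A; move En: (gdist u a) => n.
elim: n u v En => [|n IH] u v E Yu Yv Auv Wu Wv.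
  move/gdist_eq0: E => eu; subst u.
  have ev : v = b by apply: (closer_neighbour_unique A Wu Wv (closer_edge (adj_sym A))).
  by subst v; split; [split|exact: rst_refl].
have [c1 c2] := separates_gdist A Auv Wu Wv.
have gu := closer_succ A Wu.
case: (gdist_succ E) => u' [Au Eu'].
have [l1 l2] := gdist_adj_lipschitz b Au.
have [l3 l4] := gdist_adj_lipschitz a Au.
have gu' : gdist u' b = n.+1 by case: (gdist_adj_succ u' A); lia.
have duv : gdist u' v = 2.
  have := gdist_triangle u' u v; have := gdist_triangle v u' a.
  rewrite (gdist_adj (adj_sym Au)) (gdist_adj Auv); gdist_lia.
case: (median_exists u' v b) => w [].
rewrite /between duv => i1 i2 i3.
have w1 : gdist u' w = 1 by gdist_lia.
have w2 : gdist w v = 1 by lia.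
have gw : gdist w b = n by gdist_lia.
have [l5 l6] := gdist_adj_lipschitz a (gdist1_adj w2).
have fw : gdist w a = n.+1 by case: (gdist_adj_succ w A); lia.
have Yu' : Y u' by apply: (convex_between CY Yu Ya); rewrite /between (gdist_adj Au); lia.
have Yw : Y w by apply: (convex_between CY Yv Yb); rewrite /between; gdist_lia.
have [He R] : dual adj Y (a, b) (u', w).
  by apply: IH => //; [exact: gdist1_adj|rewrite /closer; lia|rewrite /closer; lia].
split => //; apply: rst_trans R _; apply: rst_sym; apply: rst_step.
apply: par_sq => //.
- exact: gdist1_adj.
- exact: adj_sym (gdist1_adj _).
- by move=> ?; subst w; lia.
- by move=> ?; subst v; lia.
Qed.

Lemma separates_dual (Y : V -> Prop) a b u v :
  convex adj Y -> Y a -> Y b -> adj a b -> Y u -> Y v -> adj u v ->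
  separates a b u v -> dual adj Y (a, b) (u, v).
Proof.
move=> CY Ya Yb A Yu Yv Auv [[Wu Wv]|[Wu Wv]]; first exact: separates_dual_closer.
by apply: dual_flip; apply: separates_dual_closer => //; exact: adj_sym.
Qed.

Lemma walk_avoid_ends (Y : V -> Prop) e x y : walk_avoid adj Y e x y -> Y x /\ Y y.
Proof. by elim=> // x0 y0 z0 Yx _ _ _ [_ Yz]. Qed.

Lemma halfspace_closer (Y : V -> Prop) a b s x :
  convex adj Y -> Y a -> Y b -> adj a b -> walk_avoid adj Y (a, b) s x ->
  (closer a b s -> closer a b x) /\ (closer b a s -> closer b a x).
Proof.
move=> CY Ya Yb A; elim=> // x0 y0 z0 Yx Axy ND Hw [IH1 IH2].
have [Yy _] := walk_avoid_ends Hw.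
split => Wx.
  apply: IH1; case: (closer_total y0 A) => // Wy; case: ND.
  by apply: separates_dual => //; left.
apply: IH2; case: (closer_total y0 (adj_sym A)) => // Wy; case: ND.
by apply: separates_dual => //; right.
Qed.

Lemma between_closer a b x w : adj a b -> closer a b x -> between x a w -> closer a b w.
Proof.
move=> A Wx; have := closer_succ A Wx; have := gdist_triangle x w b.
rewrite /between /closer; gdist_lia.
Qed.

(* If some z between x and y left the halfspace,
   so would the first steps z1, z2 from x and y towards z; but the median m of
   x, y, a stays inside, which forces d(x, y) = 2 and z1 = m. *)
Section CloserConvex.
Variables (a b : V) (n : nat).
Hypothesis Aab : adj a b.
Hypothesis IH : forall n', n' < n -> forall x y z, gdist x y = n' ->
  closer a b x -> closer a b y -> between x y z -> closer a b z.

Lemma closer_first_step x y z : gdist x y = n -> closer a b x -> closer a b y ->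
  between x y z -> ~ closer a b z -> exists z1, [/\ adj x z1, ~ closer a b z1 & between x y z1].
Proof.
move=> E Wx Wy Bz Nz.
case Ez: (gdist x z) => [|s]; first by case: Nz; rewrite -(gdist_eq0 Ez).
case: (gdist_succ Ez) => x1 [Ax Ex1].
have Bx1 : between x y x1.
  move: Bz; rewrite /between (gdist_adj Ax).
  have := gdist_triangle x1 z y; have := gdist_triangle x x1 y; rewrite (gdist_adj Ax); lia.
case: (classic (closer a b x1)) => W1; last by exists x1.
case: Nz; apply: (IH (n' := gdist x1 y)) W1 Wy _ => //; move: Bz Bx1.
  by rewrite /between (gdist_adj Ax); lia.
by rewrite /between (gdist_adj Ax); lia.
Qed.

Lemma closer_median_adj x y m z1 : gdist x y = n ->
  closer a b x -> closer a b y -> closer a b m -> between x y m -> m <> x -> m <> y ->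
  adj x z1 -> ~ closer a b z1 -> between x y z1 -> gdist m y = 1.
Proof.
move=> E Wx Wy Wm Bm Nx Ny Az N1 B1.
have hy : 0 < gdist m y by case H: (gdist m y) => //; case: Ny; exact: gdist_eq0.
have hx : 0 < gdist x m by case H: (gdist x m) => //; case: Nx; rewrite (gdist_eq0 H).
have dz := gdist_adj Az.
case: (median_exists x z1 m) => u [u1 u2 u3].
have Wu : closer a b u.
  by apply: (IH (n' := gdist x m)) Wx Wm u3 => //; move: Bm; rewrite /between; lia.
have eu : u = x by case: (between_adj Az u1) => // eu; subst u.
subst u; case: (median_exists y z1 m) => v [v1 v2 v3].
have Wv : closer a b v.
  by apply: (IH (n' := gdist y m)) Wy Wm v3 => //; move: Bm; rewrite /between; gdist_lia.
move: B1 v1 Bm u2 v2; rewrite /between => B1 v1 Bm u2 v2.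
have Bv : between x v z1.
  by have := gdist_triangle x z1 v; have := gdist_triangle x v y; rewrite /between; gdist_lia.
have ev : gdist x v = n.
  apply: NNPP => H; apply: N1.
  have lt : gdist x v < n by move: Bv; rewrite /between; gdist_lia.
  exact: (IH lt (erefl _) Wx Wv Bv).
have vy : v = y by apply: gdist_eq0; move: Bv; rewrite /between; gdist_lia.
by subst v; gdist_lia.
Qed.

Lemma closer_convex_at x y z : gdist x y = n ->
  closer a b x -> closer a b y -> between x y z -> closer a b z.
Proof.
move=> E Wx Wy Bz; apply: NNPP => Nz.
case: (closer_first_step E Wx Wy Bz Nz) => z1 [A1 N1 B1].
have E' : gdist y x = n by rewrite gdistC.
have Bz' : between y x z by move: Bz; rewrite /between; gdist_lia.
case: (closer_first_step E' Wy Wx Bz' Nz) => z2 [A2 N2 B2].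
have B2' : between x y z2 by move: B2; rewrite /between; gdist_lia.
case: (median_exists x y a) => m [m1 m2 m3].
have Wm : closer a b m by apply: (between_closer Aab Wx m3).
have gx := closer_succ Aab Wx; have gy := closer_succ Aab Wy.
have dz1 := gdist_adj A1; have dz2 := gdist_adj A2.
case: (classic (m = x)) => Mx.
  subst m; apply: N1; move: m2 B1; rewrite /between /closer.
  by have := gdist_triangle y z1 b; have := gdist_triangle z1 x a; gdist_lia.
case: (classic (m = y)) => My.
  subst m; apply: N2; move: m3 B2'; rewrite /between /closer.
  by have := gdist_triangle x z2 b; have := gdist_triangle z2 y a; gdist_lia.
have h1 := closer_median_adj E Wx Wy Wm m1 Mx My A1 N1 B1.
have m1' : between y x m by move: m1; rewrite /between; gdist_lia.
have h2 := closer_median_adj E' Wy Wx Wm m1' My Mx A2 N2 B2.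
have Wz1 : closer b a z1 by case: (closer_total z1 Aab).
have [c1 c2] := separates_gdist Aab A1 Wx Wz1.
have gm := closer_succ Aab Wm.
suff Ez1 : z1 = m by subst m.
by move: B1 m1 m2 m3; rewrite /between => B1 m1 m2 m3;
  apply: (@median_unique x y b); rewrite /between; gdist_lia.
Qed.

End CloserConvex.

Lemma closer_convex a b x y z :
  adj a b -> closer a b x -> closer a b y -> between x y z -> closer a b z.
Proof.
move=> A; move En: (gdist x y) => n; elim: n {-2}n (leqnn n) x y z En => [|N IHN] n le_nN.
  by apply: closer_convex_at => // n'; lia.
by apply: closer_convex_at => // n' lt_n'n; apply: (IHN n'); lia.
Qed.

Lemma gdist_path_le (g : nat -> V) n : (forall l, l < n -> adj (g l) (g l.+1)) ->
  forall l t, l + t <= n -> gdist (g l) (g (l + t)) <= t.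
Proof.
move=> Ha l; elim=> [|t IH] H; first by rewrite addn0 gdistxx.
have := gdist_triangle (g l) (g (l + t)) (g (l + t.+1)).
by rewrite addnS (gdist_adj (Ha _ _)); [have := IH ltac:(lia); lia|lia].
Qed.

Definition metric_geodesic (Y : V -> Prop) (g : nat -> V) n :=
  [/\ forall l, l <= n -> Y (g l), forall l, l < n -> adj (g l) (g l.+1) & gdist (g 0) (g n) = n].

Lemma geodesic_metric (Y : V -> Prop) g n :
  convex adj Y -> geodesic adj Y g n -> metric_geodesic Y g n.
Proof.
move=> CY [HY [Ha [Hw Hm]]]; split => //.
have := gdist_min Hmed (walk_sub (Q := @allV V) (fun _ _ => I) Hw).
have := Hm _ (convex_walk CY (erefl _) (HY 0 (leq0n n)) (HY n (leqnn n))); lia.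
Qed.

Lemma gdist_metric_geodesic (Y : V -> Prop) g n : metric_geodesic Y g n ->
  forall l l', l <= l' -> l' <= n -> gdist (g l) (g l') = l' - l.
Proof.
case=> _ Ha E l l' h1 h2.
have := gdist_path_le Ha (l := 0) (t := l) ltac:(lia).
have := gdist_path_le Ha (l := l) (t := l' - l) ltac:(lia).
have := gdist_path_le Ha (l := l') (t := n - l') ltac:(lia).
rewrite add0n !subnKC //.
have := gdist_triangle (g 0) (g l) (g n); have := gdist_triangle (g l) (g l') (g n); lia.
Qed.

Lemma metric_geodesic_rev (Y : V -> Prop) g n :
  metric_geodesic Y g n -> metric_geodesic Y (fun l => g (n - l)) n.
Proof.
case=> HY Ha E; split=> [l _|l lt_ln|]; first by apply: HY; lia.
  by rewrite -subSS subSn //; apply: adj_sym; apply: Ha; lia.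
by rewrite subn0 subnn gdistC.
Qed.

Lemma metric_geodesic_ends_closer (Y : V -> Prop) a b g n i :
  adj a b -> metric_geodesic Y g n -> i < n ->
  closer a b (g i) -> closer b a (g i.+1) -> closer a b (g 0) /\ closer b a (g n).
Proof.
move=> A G lt_in Wi Wi1.
have d0i := gdist_metric_geodesic G (leq0n i) (ltnW lt_in).
have d0i1 := gdist_metric_geodesic G (leq0n i.+1) lt_in.
have dii1 := gdist_metric_geodesic G (leqnSn i) lt_in.
have din := gdist_metric_geodesic G (ltnW lt_in) (leqnn n).
have di1n := gdist_metric_geodesic G lt_in (leqnn n).
split.
  case: (closer_total (g 0) A) => // Wg; case: (closer_disjoint Wi).
  by apply: (closer_convex (adj_sym A) Wg Wi1); rewrite /between d0i d0i1 dii1; lia.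
case: (closer_total (g n) A) => // Wg; case: (closer_disjoint _ Wi1).
by apply: (closer_convex A Wi Wg); rewrite /between din di1n dii1; lia.
Qed.

Lemma path_separates a b (g : nat -> V) n : adj a b ->
  closer a b (g 0) -> closer b a (g n) -> exists l, l < n /\ separates a b (g l) (g l.+1).
Proof.
move=> A W0; elim: n => [|n IH] Wn; first by case: (closer_disjoint W0 Wn).
case: (closer_total (g n) A) => Wgn; first by exists n; split => //; left.
by case: (IH Wgn) => l [lt_ln Sl]; exists l; split => //; lia.
Qed.

End MedianGraph.

(** * Orbit indices along a quasiline *)

Lemma abs_subC (m n : Z) : Z.abs (m - n) = Z.abs (n - m).
Proof. by lia. Qed.

Section LocallyFinite.
Variables (V : Type) (adj : V -> V -> Prop).
Hypothesis Hmed : median_graph adj.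
Hypothesis Hlf : locally_finite adj.

Lemma neighbour_list (l : list V) : exists N, forall u w, In u l -> adj u w -> In w N.
Proof.
elim: l => [|x l [N HN]]; first by exists nil.
case: (Hlf x) => Nx HNx; exists (Nx ++ N) => u w [<-|Hu] A; apply/in_or_app.
  by left; apply: HNx.
by right; apply: HN Hu A.
Qed.

Lemma ball_list v L : exists l, forall w, gdist adj v w <= L -> In w l.
Proof.
elim: L => [|L [l Hl]].
  by exists (v :: nil) => w H; left; apply: (gdist_eq0 Hmed); lia.
case: (neighbour_list l) => N HN; exists (l ++ N) => w H; apply/in_or_app.
case: (leqP (gdist adj v w) L) => H'; first by left; apply: Hl.
right; have E : gdist adj w v = L.+1 by rewrite (gdistC Hmed); lia.
case: (gdist_succ Hmed E) => w' [A E']; apply: (HN w'); last exact: adj_sym A.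
by apply: Hl; rewrite (gdistC Hmed) E'.
Qed.

End LocallyFinite.

Section Quasiline.
Variables (V : Type) (adj : V -> V -> Prop).
Hypothesis Hmed : median_graph adj.
Hypothesis Hlf : locally_finite adj.
Variables (Y : V -> Prop) (phi psi : V -> V).
Hypothesis CY : convex adj Y.
Hypothesis adj_phi : forall x y, adj x y <-> adj (phi x) (phi y).
Hypothesis phiK : cancel phi psi.
Hypothesis psiK : cancel psi phi.
Hypothesis Y_phi : forall x, Y x <-> Y (phi x).

Local Notation gdist := (gdist adj).
Local Notation closer := (closer adj).

Definition phiZ (m : Z) : V -> V :=
  if (0 <=? m)%Z then iter (Z.to_nat m) phi else iter (Z.to_nat (- m)) psi.

Lemma phi_phiZ j x : phi (phiZ j x) = phiZ (j + 1) x.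
Proof.
rewrite /phiZ; case: (Z.leb_spec 0 j) => H.
  have -> : (0 <=? j + 1)%Z = true by apply/Z.leb_le; lia.
  by rewrite Z2Nat.inj_add //= Nat.add_1_r.
case: (Z.leb_spec 0 (j + 1)) => H'.
  have -> : (j + 1 = 0)%Z by lia.
  have -> : Z.to_nat (- j) = 1%N by lia.
  by rewrite /= psiK.
have -> : Z.to_nat (- j) = (Z.to_nat (- (j + 1))).+1 by lia.
by rewrite iterS psiK.
Qed.

Lemma psi_phiZ j x : psi (phiZ j x) = phiZ (j - 1) x.
Proof. by have := phi_phiZ (j - 1) x; rewrite Z.sub_add => <-; rewrite phiK. Qed.

Lemma iter_phi_phiZ k j x : iter k phi (phiZ j x) = phiZ (j + Z.of_nat k) x.
Proof.
elim: k => [|k IH] /=; first by rewrite Z.add_0_r.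
by rewrite IH phi_phiZ; congr phiZ; lia.
Qed.

Lemma iter_psi_phiZ k j x : iter k psi (phiZ j x) = phiZ (j - Z.of_nat k) x.
Proof.
elim: k => [|k IH] /=; first by rewrite Z.sub_0_r.
by rewrite IH psi_phiZ; congr phiZ; lia.
Qed.

Lemma phiZ0 x : phiZ 0 x = x.
Proof. by []. Qed.

Lemma phiZ_add m j x : phiZ m (phiZ j x) = phiZ (j + m) x.
Proof.
rewrite {1}/phiZ; case: (Z.leb_spec 0 m) => H.
  by rewrite iter_phi_phiZ; congr phiZ; lia.
by rewrite iter_psi_phiZ; congr phiZ; lia.
Qed.

Lemma phiZK m x : phiZ m (phiZ (- m) x) = x.
Proof. by rewrite phiZ_add Z.add_opp_diag_l. Qed.

Lemma phiZVK m x : phiZ (- m) (phiZ m x) = x.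
Proof. by rewrite phiZ_add Z.add_opp_diag_r. Qed.

Lemma iter_phiE k x : iter k phi x = phiZ (Z.of_nat k) x.
Proof. by rewrite -{1}(phiZ0 x) iter_phi_phiZ. Qed.

Lemma iter_psiE k x : iter k psi x = phiZ (- Z.of_nat k) x.
Proof. by rewrite -{1}(phiZ0 x) iter_psi_phiZ. Qed.

Lemma adj_phiZ m x y : adj x y <-> adj (phiZ m x) (phiZ m y).
Proof.
rewrite /phiZ; case: (0 <=? m)%Z; elim: (Z.to_nat _) => //= n ->.
  exact: adj_phi.
by rewrite (adj_phi (psi _)) !psiK.
Qed.

Lemma Y_phiZ m x : Y x <-> Y (phiZ m x).
Proof.
rewrite /phiZ; case: (0 <=? m)%Z; elim: (Z.to_nat _) => //= n ->.
  exact: Y_phi.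
by rewrite (Y_phi (psi _)) psiK.
Qed.

Lemma gdist_hom (g : V -> V) x y :
  (forall u v, adj u v -> adj (g u) (g v)) -> gdist (g x) (g y) <= gdist x y.
Proof.
move=> Hg; apply: (gdist_min Hmed).
have : walk adj (@allV V) x y (gdist x y) := gdist_walk Hmed x y.
elim=> [u _|u v w n _ Auv _ IH]; first exact: walk0 (I : allV (g u)).
by apply: (walkS (y := g v)) => //; exact: Hg.
Qed.

Lemma gdist_phiZ m x y : gdist (phiZ m x) (phiZ m y) = gdist x y.
Proof.
apply/eqP; rewrite eqn_leq gdist_hom => [|u v /(adj_phiZ m) //].
have := @gdist_hom (phiZ (- m)) (phiZ m x) (phiZ m y) (fun u v => proj1 (adj_phiZ (- m) u v)).
by rewrite !phiZVK.
Qed.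

Lemma closer_phiZ m a b v : closer (phiZ m a) (phiZ m b) (phiZ m v) = closer a b v.
Proof. by rewrite /closer !gdist_phiZ. Qed.

Variables (F : list V) (z0 : V).
Hypothesis F_cover : forall y, Y y ->
  exists z k, In z F /\ (y = iter k phi z \/ y = iter k psi z).
Hypothesis F_Y : forall z, In z F -> Y z.
Hypothesis z0_F : In z0 F.

Definition orb (j : Z) := phiZ j z0.
Definition rad := foldr (fun z r => maxn (gdist z z0) r) 0 F.
Definition stride := gdist z0 (phi z0).
(* The slack [.+1] lets both ends of an edge share an index. *)
Definition near v j := gdist v (orb j) <= rad.+1.

Lemma gdist_fund_rad z : In z F -> gdist z z0 <= rad.
Proof.
rewrite /rad; elim: F => //= z1 l IH [->|/IH]; first exact: leq_maxl.
by move/leq_trans; apply; exact: leq_maxr.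
Qed.

Lemma Y_orb j : Y (orb j).
Proof. by rewrite /orb -Y_phiZ; exact: F_Y. Qed.

Lemma phiZ_orb m j : phiZ m (orb j) = orb (j + m).
Proof. exact: phiZ_add. Qed.

Lemma near_orb y : Y y -> exists j, gdist y (orb j) <= rad.
Proof.
move=> Yy; case: (F_cover Yy) => z [k [Hz [->|->]]].
  by exists (Z.of_nat k); rewrite iter_phiE /orb gdist_phiZ; exact: gdist_fund_rad.
by exists (- Z.of_nat k)%Z; rewrite iter_psiE /orb gdist_phiZ; exact: gdist_fund_rad.
Qed.

Lemma near_exists v : Y v -> exists j, near v j.
Proof. by case/near_orb => j h; exists j; rewrite /near; lia. Qed.

Lemma near_orbxx j : near (orb j) j.
Proof. by rewrite /near (gdistxx Hmed). Qed.

Lemma near_phiZ m v j : near v j -> near (phiZ m v) (j + m).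
Proof. by rewrite /near -phiZ_orb gdist_phiZ. Qed.

Lemma gdist_orb_succ j : gdist (orb j) (orb (j + 1)) = stride.
Proof.
have -> : orb (j + 1) = phiZ j (phi z0).
  by rewrite -[z0 in phi z0]phiZ0 phi_phiZ phiZ_add /orb; congr phiZ; lia.
by rewrite gdist_phiZ.
Qed.

Lemma gdist_orb_addn i n : gdist (orb i) (orb (i + Z.of_nat n)) <= stride * n.
Proof.
elim: n => [|n IH]; first by rewrite Z.add_0_r (gdistxx Hmed).
have := gdist_triangle Hmed (orb i) (orb (i + Z.of_nat n)) (orb (i + Z.of_nat n.+1)).
have -> : (i + Z.of_nat n.+1 = (i + Z.of_nat n) + 1)%Z by lia.
rewrite gdist_orb_succ; lia.
Qed.

Lemma gdist_orb i j :
  (Z.of_nat (gdist (orb i) (orb j)) <= Z.of_nat stride * Z.abs (j - i))%Z.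
Proof.
wlog le_ij : i j / (i <= j)%Z.
  move=> H; case: (Z.le_gt_cases i j) => [|lt_ji]; first exact: H.
  by rewrite (gdistC Hmed) abs_subC; apply: H; lia.
have := gdist_orb_addn i (Z.to_nat (j - i)).
have -> : (i + Z.of_nat (Z.to_nat (j - i)) = j)%Z by lia.
have -> : Z.abs (j - i) = Z.of_nat (Z.to_nat (j - i)) by lia.
lia.
Qed.

Lemma gdist_near x y j j' : near x j -> near y j' ->
  (Z.of_nat (gdist x y) <= 2 * Z.of_nat rad.+1 + Z.of_nat stride * Z.abs (j - j'))%Z.
Proof.
rewrite /near => h1 h2.
have := gdist_triangle Hmed x (orb j) y; have := gdist_triangle Hmed (orb j) (orb j') y.
have := gdist_orb (i := j) (j := j'); rewrite (gdistC Hmed (orb j') y) abs_subC; lia.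
Qed.

Lemma gdist_orb_shift i j : gdist (orb i) (orb j) = gdist (orb 0) (orb (j - i)).
Proof. by rewrite -(gdist_phiZ (- i)) !phiZ_orb; congr (gdist (orb _) (orb _)); lia. Qed.

Definition orbit_proper := forall L, exists K,
  forall i j, gdist (orb i) (orb j) <= L -> (Z.abs (j - i) <= K)%Z.

Lemma orb_index_bounded (l : list V) : injective orb ->
  exists K, forall j, In (orb j) l -> (Z.abs j <= K)%Z.
Proof.
move=> inj; elim: l => [|x l [K HK]]; first by exists 0%Z.
case: (classic (exists j0, orb j0 = x)) => [[j0 <-]|N].
  exists (Z.max K (Z.abs j0)) => j [/inj ->|/HK]; lia.
by exists K => j [E|/HK //]; case: N; exists j.
Qed.

Lemma orbit_proper_of_injective : injective orb -> orbit_proper.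
Proof.
move=> inj L; case: (ball_list Hmed Hlf (orb 0) L) => l Hl.
case: (orb_index_bounded l inj) => K HK; exists K => i j H.
by apply/HK/Hl; rewrite -gdist_orb_shift.
Qed.

Lemma orb_periodic i j l : orb i = orb j -> (i < j)%Z -> orb l = orb (l mod (j - i)).
Proof.
move=> E lt_ij; set p := (j - i)%Z.
have per l' : orb (l' + p) = orb l'.
  have -> : (l' + p = j + (l' - i))%Z by rewrite /p; lia.
  by rewrite -phiZ_orb -E phiZ_orb; congr orb; lia.
have perq (q : nat) l' : orb (l' + p * Z.of_nat q) = orb l'.
  elim: q => [|q IH]; first by rewrite Z.mul_0_r Z.add_0_r.
  have -> : (l' + p * Z.of_nat q.+1 = (l' + p * Z.of_nat q) + p)%Z by lia.
  by rewrite per IH.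
have Hp : (p <> 0)%Z by lia.
have Hd := Z.div_mod l p Hp.
case: (Z.le_gt_cases 0 (l / p)%Z) => Hq.
  by rewrite {1}Hd -(perq (Z.to_nat (l / p)%Z) (l mod p)%Z); congr orb; lia.
by rewrite -(perq (Z.to_nat (- (l / p))%Z) l); congr orb; lia.
Qed.

Lemma Y_bounded_of_periodic i j : orb i = orb j -> (i < j)%Z ->
  forall y, Y y -> gdist y z0 <= rad + stride * Z.to_nat (j - i).
Proof.
move=> E lt_ij y Yy; case: (near_orb Yy) => l Hl.
have := gdist_orb (i := 0) (j := l mod (j - i)).
rewrite -(orb_periodic l E lt_ij) (gdistC Hmed (orb 0)) [orb 0]/orb phiZ0 => h.
have [m0 mlt] := Z.mod_pos_bound l (j - i) ltac:(lia).
have : (Z.of_nat stride * Z.abs (l mod (j - i) - 0) <= Z.of_nat stride * (j - i))%Z.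
  by apply: Z.mul_le_mono_nonneg_l; lia.
have : Z.of_nat (stride * Z.to_nat (j - i)) = (Z.of_nat stride * (j - i))%Z.
  by rewrite Nat2Z.inj_mul Z2Nat.id //; lia.
have := gdist_triangle Hmed y (orb l) z0; lia.
Qed.

Lemma orbit_proper_or_bounded :
  orbit_proper \/ exists B, forall y, Y y -> gdist y z0 <= B.
Proof.
case: (classic (injective orb)) => [inj|ninj]; first by left; exact: orbit_proper_of_injective.
right; suff [i [j [E lt_ij]]] : exists i j, orb i = orb j /\ (i < j)%Z.
  by exists (rad + stride * Z.to_nat (j - i)); exact: Y_bounded_of_periodic.
apply: NNPP => H; apply: ninj => i j E; apply: NNPP => N.
case: (Z.lt_total i j) => [lt|[//|gt]]; apply: H; first by exists i, j.
by exists j, i.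
Qed.

(** * The carrier window of an essential hyperplane *)

Definition on_carrier a b w := exists w', [/\ Y w, Y w', adj w w' & separates adj a b w w'].

Definition carrier_index a b j := exists w, on_carrier a b w /\ near w j.

Definition far_from_carrier a b x r := forall w, on_carrier a b w -> r < gdist x w.

Definition closer_deep a b := forall r,
  (exists x, [/\ Y x, closer a b x & far_from_carrier a b x r]) /\
  (exists x, [/\ Y x, closer b a x & far_from_carrier a b x r]).

Definition far_index a b j L := forall j', carrier_index a b j' -> (L < Z.abs (j - j'))%Z.

Definition splits_at a b lo hi := forall v j, Y v -> near v j ->
  ((j <= lo)%Z -> closer a b v) /\ ((hi <= j)%Z -> closer b a v).

Definition orbit_window a b (w : nat) :=
  exists lo hi, (hi - lo <= Z.of_nat w)%Z /\ (splits_at a b lo hi \/ splits_at b a lo hi).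

Lemma gdist_orb_near x y j j' L : near x j -> near y j' -> gdist x y <= L ->
  gdist (orb j) (orb j') <= 2 * rad.+1 + L.
Proof.
rewrite /near => h1 h2 h3.
have := gdist_triangle Hmed (orb j) x (orb j'); have := gdist_triangle Hmed x y (orb j').
rewrite (gdistC Hmed (orb j) x); lia.
Qed.

Section Edge.
Variables (a b : V).
Hypotheses (Ya : Y a) (Yb : Y b) (Aab : adj a b).

Lemma on_carrier_Y w : on_carrier a b w -> Y w.
Proof. by case=> w' []. Qed.

Lemma separates_on_carrier u v : Y u -> Y v -> adj u v -> separates adj a b u v ->
  on_carrier a b u /\ on_carrier a b v.
Proof.
move=> Yu Yv Auv S; split; first by exists v.
by exists u; split => //; [exact: adj_sym Auv|apply/separatesC].
Qed.

Lemma separates_ab : separates adj a b a b.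
Proof. by left; split; [exact: closer_edge|exact: closer_edge (adj_sym Hmed Aab)]. Qed.

Lemma on_carrier_a : on_carrier a b a.
Proof. by exists b; split => //; exact: separates_ab. Qed.

Lemma carrier_reach_dual f : clos_refl_sym_trans_n1 _ (elem_par adj Y) (a, b) f ->
  (exists n, walk adj (on_carrier a b) a f.1 n) /\ (exists n, walk adj (on_carrier a b) a f.2 n).
Proof.
elim=> [|y z Hyz Hc [[n1 H1] [n2 H2]]].
  split; first by exists 0; constructor; exact: on_carrier_a.
  have [Ca Cb] := separates_on_carrier Ya Yb Aab separates_ab.
  by exists 1; apply: walk1.
have Dz : dual adj Y (a, b) z.
  by split; [split|apply: clos_rstn1_rst; apply: rstn1_trans Hyz Hc].
case: z Dz Hyz {Hc} => z1 z2 Dz Hyz.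
have [Yz1 Yz2 Az] := dual_edgeY Hmed Dz.
have [C1 C2] := separates_on_carrier Yz1 Yz2 Az (dual_separates Hmed Dz).
case: y H1 H2 Hyz => y1 y2 /= H1 H2 [] E; inversion E; subst.
- by split; [exists n1.+1; exact: walk_rcons H1 C1 _|exists n2.+1; exact: walk_rcons H2 C2 _].
- by split; [exists n2|exists n1].
- by split; [exists n1.+1; apply: walk_rcons H1 C1 _|exists n2.+1; apply: walk_rcons H2 C2 _];
    exact: adj_sym.
- by split; [exists n2|exists n1].
Qed.

Lemma carrier_connected w : on_carrier a b w -> exists n, walk adj (on_carrier a b) a w n.
Proof.
case=> w' [Yw Yw' A S].
have [_ R] := separates_dual Hmed CY Ya Yb Aab Yw Yw' A S.
by case: (carrier_reach_dual (clos_rst_rstn1 _ _ _ _ R)).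
Qed.

Lemma closer_off_carrier u u' : Y u -> Y u' ->
  (forall w, between adj u u' w -> ~ on_carrier a b w) -> closer a b u = closer a b u'.
Proof.
move En: (gdist u u') => n; elim: n u En => [|n IH] u E Yu Yu' H.
  by rewrite (gdist_eq0 Hmed E).
case: (gdist_succ Hmed E) => u1 [Au E1].
have B1 : between adj u u' u1 by rewrite /between (gdist_adj Hmed Au) E1 E.
have Yu1 : Y u1 := convex_between Hmed CY Yu Yu' B1.
have Nu : ~ on_carrier a b u by apply: H; rewrite /between (gdistxx Hmed).
rewrite -(IH u1) //; last first.
  move=> w; rewrite /between => Bw; apply: H.
  have := gdist_triangle Hmed u u1 w; have := gdist_triangle Hmed u w u'.
  by rewrite /between (gdist_adj Hmed Au); lia.
apply/idP/idP => Wu; [case: (closer_total Hmed u1 Aab)|case: (closer_total Hmed u Aab)] => // W';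
  case: Nu; apply: (proj1 (separates_on_carrier Yu Yu1 Au _)); [left|right]; split => //.
Qed.

Section Window.
Variable K : Z.
Hypothesis HK : forall i j,
  gdist (orb i) (orb j) <= 2 * rad.+1 + stride.+1 -> (Z.abs (j - i) <= K)%Z.

Lemma K_ge0 : (0 <= K)%Z.
Proof. by have := HK (i := 0) (j := 0); rewrite (gdistxx Hmed); lia. Qed.

Lemma carrier_index_fill n u w : walk adj (on_carrier a b) u w n ->
  forall ju jw, near u ju -> near w jw -> forall j, (Z.min ju jw <= j <= Z.max ju jw)%Z ->
  exists j', carrier_index a b j' /\ (Z.abs (j - j') <= K)%Z.
Proof.
elim=> [u0 Cu|u0 u1 w0 n0 Cu Au Hw IH] ju jw hu hw j hj.
  have := HK (i := ju) (j := jw); have := gdist_orb_near hu hw (eq_leq (gdistxx Hmed u0)).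
  by exists ju; split; [exists u0|lia].
have [C1 _] := walk_ends Hw.
case: (near_exists (on_carrier_Y C1)) => ju1 h1.
have := HK (i := ju) (j := ju1); have := gdist_orb_near hu h1 (eq_leq (gdist_adj Hmed Au)).
move=> h01 /(_ ltac:(lia)) h.
case: (Z.le_gt_cases j (Z.max ju ju1)) => c2; last by apply: (IH ju1 jw h1 hw j); lia.
case: (Z.le_gt_cases (Z.min ju ju1) j) => c1; last by apply: (IH ju1 jw h1 hw j); lia.
by exists ju; split; [exists u0|lia].
Qed.

Lemma carrier_index_dense j1 j2 j : carrier_index a b j1 -> carrier_index a b j2 ->
  (j1 <= j <= j2)%Z -> exists j', carrier_index a b j' /\ (Z.abs (j - j') <= K)%Z.
Proof.
move=> [w1 [C1 h1]] [w2 [C2 h2]] hj; case: (near_exists Ya) => ja hja.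
case: (carrier_connected C1) => n1 W1; case: (carrier_connected C2) => n2 W2.
case: (Z.le_gt_cases j ja) => c.
  by apply: (carrier_index_fill W1 hja h1); lia.
by apply: (carrier_index_fill W2 hja h2); lia.
Qed.

Lemma closer_near_orb x j : Y x -> near x j -> ~ carrier_index a b j ->
  closer a b x = closer a b (orb j).
Proof.
move=> Yx hx NC; apply: closer_off_carrier => // [|w Bw Cw]; first exact: Y_orb.
by apply: NC; exists w; split => //; move: Bw hx; rewrite /between /near; lia.
Qed.

Lemma closer_orb_succ j : (forall j', carrier_index a b j' -> (K < Z.abs (j - j'))%Z) ->
  closer a b (orb j) = closer a b (orb (j + 1)).
Proof.
move=> far; apply: closer_off_carrier; try exact: Y_orb.
move=> w Bw Cw; case: (near_exists (on_carrier_Y Cw)) => j' h'.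
have hd : gdist (orb j) w <= stride.+1 by move: Bw; rewrite /between gdist_orb_succ; lia.
have := HK (i := j) (j := j'); have := gdist_orb_near (near_orbxx j) h' hd.
by have := far j' (ex_intro _ w (conj Cw h')); lia.
Qed.

Lemma window_closer lo hi :
  (forall j, carrier_index a b j -> (j < lo - K \/ hi + K < j)%Z) ->
  forall x jx, Y x -> near x jx -> (lo <= jx <= hi)%Z -> closer a b x = closer a b (orb lo).
Proof.
move=> Hw x jx Yx hx hj.
have K0 := K_ge0.
rewrite (closer_near_orb Yx hx); last by move/Hw; lia.
have steps t : (lo + Z.of_nat t <= hi)%Z ->
    closer a b (orb (lo + Z.of_nat t)) = closer a b (orb lo).
  elim: t => [|t IHt] ht; first by rewrite Z.add_0_r.
  rewrite -IHt; last lia.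
  have -> : (lo + Z.of_nat t.+1 = (lo + Z.of_nat t) + 1)%Z by lia.
  by rewrite -closer_orb_succ // => j' /Hw; lia.
have := steps (Z.to_nat (jx - lo)); rewrite Z2Nat.id; last lia.
by rewrite Zplus_minus; apply; lia.
Qed.

Lemma closer_below_carrier al : (forall j, carrier_index a b j -> (al <= j)%Z) ->
  forall v j, Y v -> near v j -> (j <= al - K - 1)%Z ->
  closer a b v = closer a b (orb (al - K - 1)).
Proof.
move=> Hal v j Yv hv hj.
have Hw j' : carrier_index a b j' -> (j' < j - K \/ al - K - 1 + K < j')%Z by move/Hal; lia.
rewrite (window_closer Hw Yv hv); last lia.
by symmetry; apply: (window_closer Hw (Y_orb _) (near_orbxx _)); lia.
Qed.

Lemma closer_above_carrier be : (forall j, carrier_index a b j -> (j <= be)%Z) ->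
  forall v j, Y v -> near v j -> (be + K + 1 <= j)%Z ->
  closer a b v = closer a b (orb (be + K + 1)).
Proof.
move=> Hbe v j Yv hv hj.
by apply: (window_closer (lo := be + K + 1) (hi := j) _ Yv hv); [move=> j' /Hbe|]; lia.
Qed.

Lemma far_index_outside_hull j L : (K <= L)%Z -> far_index a b j L ->
  (forall j', carrier_index a b j' -> (j < j')%Z) \/
  (forall j', carrier_index a b j' -> (j' < j)%Z).
Proof.
move=> le_KL far; apply: NNPP => N.
have [j1 [C1 le1]] : exists j1, carrier_index a b j1 /\ (j1 <= j)%Z.
  apply: NNPP => N1; apply: N; left => j' C'; apply: NNPP => ?; apply: N1.
  by exists j'; split => //; lia.
have [j2 [C2 le2]] : exists j2, carrier_index a b j2 /\ (j <= j2)%Z.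
  apply: NNPP => N2; apply: N; right => j' C'; apply: NNPP => ?; apply: N2.
  by exists j'; split => //; lia.
case: (carrier_index_dense C1 C2 (conj le1 le2)) => j' [C' h'].
by have := far j' C'; lia.
Qed.

Section Deep.
Hypothesis Hdeep : closer_deep a b.

Lemma far_index_of_far x j L : near x j ->
  far_from_carrier a b x (Z.to_nat (2 * Z.of_nat rad.+1 + Z.of_nat stride * L)) ->
  far_index a b j L.
Proof.
move=> hx Fx j' [w [Cw hw]]; have := Fx w Cw; have := gdist_near hx hw; nia.
Qed.

Lemma far_points L : exists x1 j1 x2 j2,
  [/\ Y x1, closer a b x1, near x1 j1 & far_index a b j1 L] /\
  [/\ Y x2, closer b a x2, near x2 j2 & far_index a b j2 L].
Proof.
case: (Hdeep (Z.to_nat (2 * Z.of_nat rad.+1 + Z.of_nat stride * L))).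
move=> [x1 [Y1 W1 F1]] [x2 [Y2 W2 F2]].
case: (near_exists Y1) => j1 h1; case: (near_exists Y2) => j2 h2.
exists x1, j1, x2, j2; split; split => //.
  exact: far_index_of_far h1 F1.
exact: far_index_of_far h2 F2.
Qed.

Lemma carrier_index_bounded_below_or_above :
  (exists al, forall j, carrier_index a b j -> (al <= j)%Z) \/
  (exists be, forall j, carrier_index a b j -> (j <= be)%Z).
Proof.
case: (far_points K) => x1 [j1 [_ [_ [[_ _ _ F1] _]]]].
by case: (far_index_outside_hull (Z.le_refl K) F1) => H; [left|right]; exists j1 => j /H; lia.
Qed.

Lemma carrier_index_bounded_below :
  (exists be, forall j, carrier_index a b j -> (j <= be)%Z) ->
  exists al, forall j, carrier_index a b j -> (al <= j)%Z.
Proof.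
move=> [be Hbe]; case: (near_exists Ya) => ja hja.
have CIa : carrier_index a b ja by exists a; split => //; exact: on_carrier_a.
have K0 := K_ge0; have := Hbe _ CIa => le_ja_be.
set L := (be - ja + 2 * K + 1)%Z.
have above j : far_index a b j L ->
    (exists al, forall j, carrier_index a b j -> (al <= j)%Z) \/ (be + K + 1 <= j)%Z.
  move=> Fj; case: (far_index_outside_hull (j := j) (L := L) ltac:(lia) Fj) => H.
    by left; exists j => j' /H; lia.
  by right; have := Fj _ CIa; have := H _ CIa; lia.
case: (far_points L) => x1 [j1 [x2 [j2 [[Y1 W1 h1 F1] [Y2 W2 h2 F2]]]]].
case: (above _ F1) => [//|a1]; case: (above _ F2) => [//|a2].
have := closer_above_carrier Hbe Y2 h2 a2.
rewrite -(closer_above_carrier Hbe Y1 h1 a1) W1 => W2'.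
by case: (closer_disjoint W2' W2).
Qed.

Lemma carrier_index_bounded_above :
  (exists al, forall j, carrier_index a b j -> (al <= j)%Z) ->
  exists be, forall j, carrier_index a b j -> (j <= be)%Z.
Proof.
move=> [al Hal]; case: (near_exists Ya) => ja hja.
have CIa : carrier_index a b ja by exists a; split => //; exact: on_carrier_a.
have K0 := K_ge0; have := Hal _ CIa => le_al_ja.
set L := (ja - al + 2 * K + 1)%Z.
have below j : far_index a b j L ->
    (exists be, forall j, carrier_index a b j -> (j <= be)%Z) \/ (j <= al - K - 1)%Z.
  move=> Fj; case: (far_index_outside_hull (j := j) (L := L) ltac:(lia) Fj) => H.
    by right; have := Fj _ CIa; have := H _ CIa; lia.
  by left; exists j => j' /H; lia.
case: (far_points L) => x1 [j1 [x2 [j2 [[Y1 W1 h1 F1] [Y2 W2 h2 F2]]]]].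
case: (below _ F1) => [//|b1]; case: (below _ F2) => [//|b2].
have := closer_below_carrier Hal Y2 h2 b2.
rewrite -(closer_below_carrier Hal Y1 h1 b1) W1 => W2'.
by case: (closer_disjoint W2' W2).
Qed.

Lemma orbit_window_of_bounds al be :
  (forall j, carrier_index a b j -> (al <= j)%Z) ->
  (forall j, carrier_index a b j -> (j <= be)%Z) -> exists w, orbit_window a b w.
Proof.
move=> Hal Hbe; case: (near_exists Ya) => ja hja.
have CIa : carrier_index a b ja by exists a; split => //; exact: on_carrier_a.
have K0 := K_ge0; have := Hal _ CIa; have := Hbe _ CIa => le_ja_be le_al_ja.
set lo := (al - K - 1)%Z; set hi := (be + K + 1)%Z.
have side v j : Y v -> near v j -> far_index a b j (hi - lo) ->
    closer a b v = closer a b (orb lo) \/ closer a b v = closer a b (orb hi).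
  move=> Yv hv Fj; have := Fj _ CIa; case: (Z.le_gt_cases j lo) => c ?.
    by left; exact: (closer_below_carrier Hal Yv hv c).
  by right; apply: (closer_above_carrier Hbe Yv hv); rewrite /hi /lo in c *; lia.
case: (far_points (hi - lo)) => x1 [j1 [x2 [j2 [[Y1 W1 h1 F1] [Y2 W2 h2 F2]]]]].
have N2 : closer a b x2 = false by apply/negbTE; rewrite (closerN Hmed _ Aab).
have Dlohi : closer a b (orb hi) = ~~ closer a b (orb lo).
  case: (side _ _ Y1 h1 F1) => E1; case: (side _ _ Y2 h2 F2) => E2; move: E1 E2;
  by rewrite W1 N2; case: (closer a b (orb lo)); case: (closer a b (orb hi)).
exists (Z.to_nat (hi - lo)), lo, hi; split; first lia.
case E: (closer a b (orb lo)); [left|right] => v j Yv hv; split => hj.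
- by rewrite (closer_below_carrier Hal Yv hv hj) E.
- by rewrite -(closerN Hmed _ Aab) (closer_above_carrier Hbe Yv hv hj) Dlohi E.
- by rewrite -(closerN Hmed _ Aab) (closer_below_carrier Hal Yv hv hj) E.
- by rewrite (closer_above_carrier Hbe Yv hv hj) Dlohi E.
Qed.

End Deep.
End Window.

Lemma orbit_window_edge : orbit_proper -> closer_deep a b -> exists w, orbit_window a b w.
Proof.
move=> Hp Hdeep; case: (Hp (2 * rad.+1 + stride.+1)) => K HK.
case: (carrier_index_bounded_below_or_above HK Hdeep) => [[al Hal]|[be Hbe]].
  have [be Hbe] := carrier_index_bounded_above HK Hdeep (ex_intro _ al Hal).
  exact: (orbit_window_of_bounds HK Hdeep Hal Hbe).
have [al Hal] := carrier_index_bounded_below HK Hdeep (ex_intro _ be Hbe).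
exact: (orbit_window_of_bounds HK Hdeep Hal Hbe).
Qed.

End Edge.

Lemma essential_closer_deep a b : Y a -> Y b -> adj a b ->
  essential adj Y a b -> closer_deep a b.
Proof.
move=> Ya Yb A [Da Db] r.
have far s x : walk_avoid adj Y (a, b) s x ->
    (forall f, dual adj Y (a, b) f -> ~ dle adj Y x f.1 r /\ ~ dle adj Y x f.2 r) ->
    far_from_carrier a b x r.
  move=> Hx Hf w [w' [Yw Yw' Aww' S]].
  have [_ Yx] := walk_avoid_ends Hx.
  have [N _] := Hf _ (separates_dual Hmed CY Ya Yb A Yw Yw' Aww' S).
  by rewrite ltnNge; apply/negP => H; apply/N/(dle_gdist Hmed r CY Yx Yw).
split.
  case: (Da r) => x [Hx Hf]; exists x; split; last exact: far Hx Hf.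
    by case: (walk_avoid_ends Hx).
  by apply: (proj1 (halfspace_closer Hmed CY Ya Yb A Hx)); exact: closer_edge.
case: (Db r) => x [Hx Hf]; exists x; split; last exact: far Hx Hf.
  by case: (walk_avoid_ends Hx).
by apply: (proj2 (halfspace_closer Hmed CY Ya Yb A Hx)); exact: closer_edge (adj_sym Hmed A).
Qed.

Lemma separates_phiZ m a b u v :
  separates adj (phiZ m a) (phiZ m b) (phiZ m u) (phiZ m v) <-> separates adj a b u v.
Proof. by rewrite /separates !closer_phiZ. Qed.

Lemma on_carrier_phiZ m a b w : on_carrier a b w -> on_carrier (phiZ m a) (phiZ m b) (phiZ m w).
Proof.
case=> w' [Yw Yw' A S]; exists (phiZ m w').
by split; [rewrite -Y_phiZ|rewrite -Y_phiZ|rewrite -adj_phiZ|rewrite separates_phiZ].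
Qed.

Lemma closer_deep_phiZ m a b : closer_deep (phiZ m a) (phiZ m b) -> closer_deep a b.
Proof.
move=> H r; case: (H r) => [[x1 [Y1 W1 F1]] [x2 [Y2 W2 F2]]].
have back x : far_from_carrier (phiZ m a) (phiZ m b) x r ->
    far_from_carrier a b (phiZ (- m) x) r.
  move=> Fx w Cw; have := Fx _ (on_carrier_phiZ m Cw).
  by rewrite -{1}(phiZK m x) gdist_phiZ.
split; [exists (phiZ (- m) x1)|exists (phiZ (- m) x2)]; split; try exact: back;
  by [rewrite -Y_phiZ | rewrite -(closer_phiZ m) phiZK].
Qed.

Lemma splits_at_phiZ m a b lo hi : splits_at a b lo hi ->
  splits_at (phiZ m a) (phiZ m b) (lo + m) (hi + m).
Proof.
move=> H v j Yv hv.
have [h1 h2] := H (phiZ (- m) v) (j - m)%Z (proj1 (Y_phiZ (- m) v) Yv) (near_phiZ (- m) hv).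
by split => hj; rewrite -(phiZK m v) closer_phiZ; [apply: h1|apply: h2]; lia.
Qed.

Lemma orbit_window_phiZ m a b w : orbit_window a b w -> orbit_window (phiZ m a) (phiZ m b) w.
Proof.
case=> lo [hi [Hw H]]; exists (lo + m)%Z, (hi + m)%Z; split; first lia.
by case: H => H; [left|right]; exact: splits_at_phiZ.
Qed.

Lemma orbit_window_mono a b w w' : w <= w' -> orbit_window a b w -> orbit_window a b w'.
Proof. by move=> le_ww' [lo [hi [Hw H]]]; exists lo, hi; split => //; lia. Qed.

Lemma fund_edge_list : exists E : list (V * V), forall z w, In z F -> adj z w -> In (z, w) E.
Proof.
elim: F => [|x l [E HE]]; first by exists nil.
case: (Hlf x) => Nx HNx.
exists (map (fun w => (x, w)) Nx ++ E) => z w [<-|Hz] A; apply/in_or_app.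
  by left; apply: in_map; apply: HNx.
by right; apply: HE.
Qed.

Lemma edge_translate_fund (E : list (V * V)) :
  (forall z w, In z F -> adj z w -> In (z, w) E) ->
  forall a b, Y a -> adj a b -> exists m e, [/\ In e E, a = phiZ m e.1 & b = phiZ m e.2].
Proof.
move=> HE a b Ya A.
have [m [z [Hz Ea]]] : exists m z, In z F /\ a = phiZ m z.
  case: (F_cover Ya) => z [k [Hz [->|->]]].
    by exists (Z.of_nat k), z; rewrite iter_phiE.
  by exists (- Z.of_nat k)%Z, z; rewrite iter_psiE.
exists m, (z, phiZ (- m) b); split => //=; last by rewrite phiZK.
by apply: (HE _ _ Hz); apply/(adj_phiZ m); rewrite phiZK -Ea.
Qed.

Lemma orbit_window_list (E : list (V * V)) : orbit_proper -> exists w, forall e, In e E ->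
  Y e.1 -> Y e.2 -> adj e.1 e.2 -> closer_deep e.1 e.2 -> orbit_window e.1 e.2 w.
Proof.
move=> Hp; elim: E => [|e E [w Hw]]; first by exists 0.
case: (classic (Y e.1 /\ Y e.2 /\ adj e.1 e.2 /\ closer_deep e.1 e.2)) => [[Y1 [Y2 [A He]]]|N].
  case: (orbit_window_edge Y1 Y2 A Hp He) => w1 H1; exists (maxn w w1).
  move=> e' [<-|H'] Y1' Y2' A' He'; first by apply: orbit_window_mono H1; exact: leq_maxr.
  by apply: orbit_window_mono (Hw _ H' Y1' Y2' A' He'); exact: leq_maxl.
exists w => e' [<-|H'] Y1' Y2' A' He'; last exact: Hw.
by case: N.
Qed.

Lemma not_closer_deep_of_bounded B a b : (forall y, Y y -> gdist y z0 <= B) ->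
  Y a -> Y b -> adj a b -> ~ closer_deep a b.
Proof.
move=> HB Ya Yb A He; case: (He (B + B)) => [[x [Yx _ Fx]] _].
have := Fx a (on_carrier_a Ya Yb A); have := gdist_triangle Hmed x z0 a.
by have := HB _ Yx; have := HB _ Ya; rewrite (gdistC Hmed a z0); lia.
Qed.

Lemma orbit_window_uniform : exists w, forall a b, Y a -> Y b -> adj a b ->
  closer_deep a b -> orbit_window a b w.
Proof.
case: orbit_proper_or_bounded => [Hp|[B HB]]; last first.
  by exists 0 => a b Ya Yb A /(not_closer_deep_of_bounded HB Ya Yb A).
case: fund_edge_list => E HE; case: (orbit_window_list E Hp) => w Hw.
exists w => a b Ya Yb A He.
case: (edge_translate_fund HE Ya A) => m [e [He' ea eb]].
rewrite {}ea {}eb in Ya Yb A He *; apply: orbit_window_phiZ; apply: Hw => //.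
- by rewrite (Y_phiZ m).
- by rewrite (Y_phiZ m).
- by rewrite (adj_phiZ m).
- exact: closer_deep_phiZ He.
Qed.

(** * Translates of a hyperplane *)

Definition translation_bound w := 2 * rad.+1 + stride * w + stride.

Lemma splits_at_index_lt a b lo hi v j : splits_at a b lo hi -> Y v -> near v j ->
  closer a b v -> (j < hi)%Z.
Proof.
move=> H Yv hv Wv; apply: NNPP => N.
by apply: (closer_disjoint Wv); apply: (proj2 (H v j Yv hv)); lia.
Qed.

Lemma splits_at_index_gt a b lo hi v j : splits_at a b lo hi -> Y v -> near v j ->
  closer b a v -> (lo < j)%Z.
Proof.
move=> H Yv hv Wv; apply: NNPP => N.
by apply: (closer_disjoint _ Wv); apply: (proj1 (H v j Yv hv)); lia.
Qed.

Lemma index_far_apart x y j j' w k M : 0 < k -> near x j -> near y j' ->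
  translation_bound w < M -> k * M <= gdist x y -> (Z.of_nat w + Z.of_nat k < Z.abs (j - j'))%Z.
Proof.
rewrite /translation_bound => k0 hx hy hM hk; have := gdist_near hx hy.
have : k * (2 * rad.+1 + stride * w + stride).+1 <= k * M by rewrite leq_mul2l hM orbT.
have := leq_pmull (2 * rad.+1 + stride * w) k0.
nia.
Qed.

Lemma gdist_index_close x y j j' w k : 0 < k -> near x j -> near y j' ->
  (Z.abs (j - j') <= Z.of_nat w + Z.of_nat k)%Z -> gdist x y <= k * translation_bound w.
Proof.
rewrite /translation_bound => k0 hx hy hj; have := gdist_near hx hy.
have := leq_pmull (2 * rad.+1 + stride * w) k0.
nia.
Qed.

Lemma translate_halfspace_gdist a b w k s x y : orbit_window a b w ->
  Z.abs s = Z.of_nat k -> 0 < k -> Y x -> Y y -> closer a b x -> closer a b y ->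
  closer b a (phiZ (- s) x) -> closer b a (phiZ (- s) y) -> gdist x y <= k * translation_bound w.
Proof.
move=> [lo [hi [Hw Hs]]] hs k0 Yx Yy Wx Wy Wx' Wy'.
case: (near_exists Yx) => jx hx; case: (near_exists Yy) => jy hy.
have Yx' := proj1 (Y_phiZ (- s) x) Yx; have Yy' := proj1 (Y_phiZ (- s) y) Yy.
have hx' := near_phiZ (- s) hx; have hy' := near_phiZ (- s) hy.
apply: (gdist_index_close k0 hx hy).
case: Hs => Hs.
- have := splits_at_index_lt Hs Yx hx Wx; have := splits_at_index_lt Hs Yy hy Wy.
  have := splits_at_index_gt Hs Yx' hx' Wx'; have := splits_at_index_gt Hs Yy' hy' Wy'; lia.
- have := splits_at_index_gt Hs Yx hx Wx; have := splits_at_index_gt Hs Yy hy Wy.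
  have := splits_at_index_lt Hs Yx' hx' Wx'; have := splits_at_index_lt Hs Yy' hy' Wy'; lia.
Qed.

Lemma translate_crosses_oriented g n k M s a b lo hi w i :
  metric_geodesic adj Y g n -> Z.abs s = Z.of_nat k -> 0 < k -> adj a b ->
  splits_at a b lo hi -> (hi - lo <= Z.of_nat w)%Z -> translation_bound w < M ->
  i < n -> closer a b (g i) -> closer b a (g i.+1) -> k * M <= i -> k * M <= n - i.+1 ->
  exists l, l < n /\ separates adj (phiZ s a) (phiZ s b) (g l) (g l.+1).
Proof.
move=> G hs k0 A Hs Hw hM lt_in Wi Wi1 h1 h2.
have [W0 Wn] := metric_geodesic_ends_closer Hmed A G lt_in Wi Wi1.
have [GY Ga _] := G.
have Y0 := GY 0 (leq0n n); have Yn := GY n (leqnn n); have Yi := GY i (ltnW lt_in).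
case: (near_orb Yi) => ji hi0.
have ni : near (g i) ji by rewrite /near; lia.
have ni1 : near (g i.+1) ji.
  have := gdist_triangle Hmed (g i.+1) (g i) (orb ji).
  by rewrite (gdist_adj Hmed (adj_sym Hmed (Ga i lt_in))) /near; lia.
case: (near_exists Y0) => j0 n0; case: (near_exists Yn) => jn nn.
have := splits_at_index_lt Hs Yi ni Wi; have := splits_at_index_gt Hs (GY _ lt_in) ni1 Wi1.
have := splits_at_index_lt Hs Y0 n0 W0; have := splits_at_index_gt Hs Yn nn Wn.
have := index_far_apart (x := g 0) (y := g i) k0 n0 ni hM.
have := index_far_apart (x := g i) (y := g n) k0 ni nn hM.
rewrite !(gdist_metric_geodesic Hmed G) //; try exact: ltnW.
move=> /(_ ltac:(lia)) far_in /(_ ltac:(lia)) far_0i *.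
(* g 0 and g n lie at least k indices beyond the window, so on opposite sides of
   the translated hyperplane. *)
have [Hs0 _] := splits_at_phiZ s Hs Y0 n0; have [_ Hsn] := splits_at_phiZ s Hs Yn nn.
apply: (path_separates Hmed); [exact: (proj1 (adj_phiZ s a b) A)|apply: Hs0; lia|apply: Hsn; lia].
Qed.


Lemma translate_crosses_splits g n k M s a b lo hi w i :
  metric_geodesic adj Y g n -> Z.abs s = Z.of_nat k -> 0 < k -> adj a b ->
  splits_at a b lo hi -> (hi - lo <= Z.of_nat w)%Z -> translation_bound w < M ->
  i < n -> separates adj a b (g i) (g i.+1) -> k * M <= i -> k * M <= n - i.+1 ->
  exists l, l < n /\ separates adj (phiZ s a) (phiZ s b) (g l) (g l.+1).
Proof.
move=> G hs k0 A Hs Hw hM lt_in [[Wi Wi1]|[Wi Wi1]] h1 h2.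
  exact: (translate_crosses_oriented G hs k0 A Hs Hw hM lt_in Wi Wi1 h1 h2).
have lt' : n - i.+1 < n by lia.
have e1 : n - (n - i.+1) = i.+1 by lia.
have e2 : n - (n - i.+1).+1 = i by lia.
have W1 : closer a b (g (n - (n - i.+1))) by rewrite e1.
have W2 : closer b a (g (n - (n - i.+1).+1)) by rewrite e2.
case: (translate_crosses_oriented (metric_geodesic_rev Hmed G) hs k0 A Hs Hw hM lt' W1 W2) => //.
  by rewrite e2.
move=> l [lt_ln S]; exists (n - l.+1); split; first lia.
by apply/separatesC; have -> : (n - l.+1).+1 = n - l by lia.
Qed.

Lemma translate_crosses g n k M s a b w i :
  metric_geodesic adj Y g n -> Z.abs s = Z.of_nat k -> 0 < k -> adj a b ->
  orbit_window a b w -> translation_bound w < M ->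
  i < n -> separates adj a b (g i) (g i.+1) -> k * M <= i -> k * M <= n - i.+1 ->
  exists l, l < n /\ separates adj (phiZ s a) (phiZ s b) (g l) (g l.+1).
Proof.
move=> G hs k0 A [lo [hi [Hw [Hs|Hs]]]] hM lt_in S h1 h2.
  exact: (translate_crosses_splits G hs k0 A Hs Hw hM lt_in S h1 h2).
have S' : separates adj b a (g i) (g i.+1) by apply/separates_swap.
case: (translate_crosses_splits G hs k0 (adj_sym Hmed A) Hs Hw hM lt_in S' h1 h2) => l [lt_ln Sl].
by exists l; split => //; apply/separates_swap.
Qed.

Lemma halfspace_translate_diam a b w k s Nb (t : V -> V) : edgeY adj Y (a, b) ->
  orbit_window a b w -> Z.abs s = Z.of_nat k -> 0 < k -> translation_bound w <= Nb ->
  (forall z, t z = phiZ s z) ->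
  diam_le adj Y (fun x => halfspace adj Y a b a x /\
                   exists z, halfspace adj Y a b b z /\ x = t z) (k * Nb).
Proof.
move=> [Ya Yb A] Hw hs k0 hN Et x y [Hx [zx [Hzx ex]]] [Hy [zy [Hzy ey]]]; subst x y.
have [_ Yx] := walk_avoid_ends Hx; have [_ Yy] := walk_avoid_ends Hy.
have side u v : halfspace adj Y a b u v ->
    (closer a b u -> closer a b v) /\ (closer b a u -> closer b a v).
  by move=> H; exact: (halfspace_closer Hmed CY Ya Yb A H).
have Wx := proj1 (side _ _ Hx) (closer_edge Hmed A).
have Wy := proj1 (side _ _ Hy) (closer_edge Hmed A).
have Wzx := proj2 (side _ _ Hzx) (closer_edge Hmed (adj_sym Hmed A)).
have Wzy := proj2 (side _ _ Hzy) (closer_edge Hmed (adj_sym Hmed A)).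
apply/(dle_gdist Hmed _ CY Yx Yy); apply: leq_trans (leq_mul (leqnn k) hN).
by apply: (translate_halfspace_gdist Hw hs k0 Yx Yy Wx Wy); rewrite Et phiZVK.
Qed.

Lemma crosses_translate a b w k s M g n i (t : V -> V) : edgeY adj Y (a, b) ->
  orbit_window a b w -> Z.abs s = Z.of_nat k -> 0 < k -> translation_bound w < M ->
  (forall z, t z = phiZ s z) -> geodesic adj Y g n -> i < n ->
  dual adj Y (a, b) (g i, g i.+1) -> k * M <= i -> k * M <= n - i.+1 ->
  crosses adj Y (t a, t b) g n.
Proof.
move=> [Ya Yb A] Hw hs k0 hM Et Geo lt_in D h1 h2.
have G := geodesic_metric Hmed CY Geo; have [GY Ga _] := G.
case: (translate_crosses G hs k0 A Hw hM lt_in (dual_separates Hmed D) h1 h2) => l [lt_ln S].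
exists l; split => //; rewrite !Et.
apply: (separates_dual Hmed CY) => //; try exact: (proj1 (Y_phiZ s _)).
- exact: (proj1 (adj_phiZ s a b) A).
- exact: GY (ltnW lt_ln).
- exact: GY lt_ln.
- exact: Ga lt_ln.
Qed.

End Quasiline.

Theorem lemma5p7 (V : Type) (adj : V -> V -> Prop) (G : (V -> V) -> Prop)
  (HX : compact_npc_cover adj G)
  (Y : V -> Prop) (phi psi : V -> V)
  (HQ : quasiline adj G Y phi psi) :
  exists N M : nat, forall Nb Mb : nat, N <= Nb -> M <= Mb ->
  forall k : nat, 0 < k ->
  (* (1) *)
  (forall a b : V, edgeY adj Y (a, b) -> essential adj Y a b ->
     diam_le adj Y (fun x => halfspace adj Y a b a x /\
                     exists z, halfspace adj Y a b b z /\ x = iter k phi z) (k * Nb) /\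
     diam_le adj Y (fun x => halfspace adj Y a b a x /\
                     exists z, halfspace adj Y a b b z /\ x = iter k psi z) (k * Nb)) /\
  (* (2) *)
  (forall (a b : V) (gamma : nat -> V) (n i : nat),
     edgeY adj Y (a, b) -> essential adj Y a b ->
     geodesic adj Y gamma n -> i < n ->
     dual adj Y (a, b) (gamma i, gamma i.+1) ->
     k * Mb <= i -> k * Mb <= n - i.+1 ->
     crosses adj Y (iter k phi a, iter k phi b) gamma n /\
     crosses adj Y (iter k psi a, iter k psi b) gamma n).
Proof.
case: HX => Hmed [Hlf [Haut _]].
case: HQ => [[y0 Yy0] [CY [Gphi [phiK [psiK [_ [Y_phi [F [F_Y F_cover]]]]]]]]].
have adj_phi := proj2 (Haut _ Gphi).
have [z0 z0_F] : exists z0, In z0 F by case: (F_cover _ Yy0) => z [k [Hz _]]; exists z.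
have [w Hw] := orbit_window_uniform Hmed Hlf CY adj_phi phiK psiK Y_phi F_cover F_Y z0_F.
exists (translation_bound adj phi F z0 w), (translation_bound adj phi F z0 w).+1.
move=> Nb Mb hN hM k k0.
have window a b : edgeY adj Y (a, b) -> essential adj Y a b ->
    orbit_window adj Y phi psi F z0 a b w.
  by case=> Ya Yb A Ess; apply: Hw => //; exact: essential_closer_deep.
have diam := halfspace_translate_diam Hmed CY adj_phi phiK psiK Y_phi F_cover.
have cross := crosses_translate Hmed CY adj_phi phiK psiK Y_phi F_cover.
have hs_phi : Z.abs (Z.of_nat k) = Z.of_nat k by lia.
have hs_psi : Z.abs (- Z.of_nat k) = Z.of_nat k by lia.
split=> [a b E Ess|a b g n i E Ess Geo lt_in D h1 h2]; have Hab := window a b E Ess; split.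
- exact: diam E Hab hs_phi k0 hN (iter_phiE psiK k).
- exact: diam E Hab hs_psi k0 hN (iter_psiE phiK psiK k).
- exact: cross E Hab hs_phi k0 hM (iter_phiE psiK k) Geo lt_in D h1 h2.
- exact: cross E Hab hs_psi k0 hM (iter_psiE phiK psiK k) Geo lt_in D h1 h2.
Qed.
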